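(* Let $\Omega\subset\mathbb{R}^n$ be a domain that is star-shaped with respect to a point $x^*\in\Omega$, and let $g\in C(\Omega)$. Define $u:\Omega\to\mathbb{R}$ by \[ u(x)=\max\{ g(y) \mid y = x^* + t(x-x^* )\in\Omega,\ t\in[0,1]\}. \] Then $u$ is star-shaped with respect to $x^*$ and $u=SS^+(g)$.
   Context: A set $S\subset\mathbb{R}^n$ is star-shaped with respect to $x^*$ if $x\in S$ implies $tx^*+(1-t)x\in S$ for all $t\in[0,1]$. A function $v:\Omega\to\mathbb{R}$ is star-shaped with respect to $x^*$ if each sublevel set $\{x\in\Omega: v(x)\le\alpha\}$, $\alpha\in\mathbb{R}$, is star-shaped with respect to $x^*$. The upper star-shaped envelope of $g$ with respect to $x^*$ is $SS^+(g)(x)=\inf\{v(x) \mid v:\Omega\to\mathbb{R} \text{ star-shaped with respect to } x^*,\ v\ge g \text{ on } \Omega\}$. *)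

From HB Require Import structures.
From mathcomp Require Import all_boot all_order all_algebra.
From mathcomp Require Import all_classical all_reals all_analysis.
Set Implicit Arguments. Unset Strict Implicit. Unset Printing Implicit Defensive.
Import Order.TTheory GRing.Theory Num.Theory.
Import numFieldNormedType.Exports.
Local Open Scope classical_set_scope.
Local Open Scope ring_scope.

Definition star_set (R : realType) (n : nat) (S : set 'rV[R]_n) (xs : 'rV[R]_n) : Prop :=
  forall x, S x -> forall t : R, 0 <= t <= 1 -> S (t *: xs + (1 - t) *: x).

Definition star_fun (R : realType) (n : nat) (Omega : set 'rV[R]_n) (xs : 'rV[R]_n)
  (v : 'rV[R]_n -> R) : Prop :=
  forall alpha : R, star_set [set x | Omega x /\ v x <= alpha] xs.

Definition SSplus (R : realType) (n : nat) (Omega : set 'rV[R]_n) (xs : 'rV[R]_n)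
  (g : 'rV[R]_n -> R) (x : 'rV[R]_n) : R :=
  inf [set v x | v in [set v : 'rV[R]_n -> R |
         star_fun Omega xs v /\ (forall y, Omega y -> g y <= v y)]].

(* u(x) = max { g(y) | y = xs + t (x - xs) in Omega, t in [0,1] } (taken as a sup;
   it is attained by continuity/compactness). *)
Definition ray_max (R : realType) (n : nat) (Omega : set 'rV[R]_n) (xs : 'rV[R]_n)
  (g : 'rV[R]_n -> R) (x : 'rV[R]_n) : R :=
  sup [set g (xs + t *: (x - xs)) | t in
         [set t : R | 0 <= t <= 1 /\ Omega (xs + t *: (x - xs))]].

From HB Require Import structures.
From mathcomp Require Import all_boot all_order all_algebra.
From mathcomp Require Import all_classical all_reals all_analysis.
Import Order.TTheory GRing.Theory Num.Theory.
Import numFieldNormedType.Exports.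
Local Open Scope classical_set_scope.
Local Open Scope ring_scope.
Set Implicit Arguments. Unset Strict Implicit.

(* On the segment from x* to x, u(x) is the maximum of g, and it is finite
   because g is continuous on that compact segment.  Moving x towards x*
   shrinks the segment, so u can only decrease: the sublevel sets of u are
   star-shaped.  Conversely, if v >= g is star-shaped then every point y of
   the segment lies in the sublevel set {v <= v(x)}, so g(y) <= v(y) <= v(x)
   and u <= v.  Since u itself is a competitor, u = SS^+(g). *)

Lemma inf_attained (R : realType) (E : set R) x : E x -> lbound E x -> inf E = x.
Proof.
move=> Ex lbx; apply/le_anti/andP; split; first by apply: ge_inf => //; exists x.
by apply: lb_le_inf => //; exists x.
Qed.

Section Rays.
Variables (R : numDomainType) (V : lmodType R).
Implicit Types (a b : V) (s t : R).

Lemma convex_comb_ray a b s : s *: a + (1 - s) *: b = a + (1 - s) *: (b - a).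
Proof.
rewrite scalerBr !scalerBl !scale1r.
by rewrite opprB [s *: a - a]addrC [RHS]addrCA addNKr addrC.
Qed.

Lemma ray_comp a b s t : a + s *: ((a + t *: (b - a)) - a) = a + (s * t) *: (b - a).
Proof. by rewrite [a + t *: _]addrC addrK scalerA. Qed.

End Rays.

Lemma unit_interval_subr (R : numDomainType) (t : R) :
  0 <= t <= 1 -> 0 <= 1 - t <= 1.
Proof. by case/andP=> t0 t1; rewrite subr_ge0 t1 lerBlDr lerDl t0. Qed.

Section StarEnvelope.
Variables (R : realType) (n : nat) (Omega : set 'rV[R]_n) (xs : 'rV[R]_n).
Variable g : 'rV[R]_n -> R.
Implicit Types (x : 'rV[R]_n) (v : 'rV[R]_n -> R) (t : R).

Definition ray_image x : set R :=
  [set g (xs + t *: (x - xs)) | t in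
     [set t : R | 0 <= t <= 1 /\ Omega (xs + t *: (x - xs))]].

Hypotheses (oO : open Omega) (Oxs : Omega xs) (st : star_set Omega xs).
Hypothesis cg : {within Omega, continuous g}.

Lemma ray_maxE x : ray_max Omega xs g x = sup (ray_image x).
Proof. by []. Qed.

Lemma star_set_ray x t : Omega x -> 0 <= t <= 1 -> Omega (xs + t *: (x - xs)).
Proof.
move=> Ox t01; have -> : t = 1 - (1 - t) by rewrite subKr.
by rewrite -convex_comb_ray; apply: st => //; apply: unit_interval_subr.
Qed.

Lemma ray_image_neq0 x : ray_image x !=set0.
Proof. by exists (g xs), 0; rewrite /= ?scale0r ?addr0 ?lexx ?ler01. Qed.

Lemma ray_image_bounded x : Omega x -> has_ubound (ray_image x).
Proof.
move=> Ox; have cf : {within `[0, 1], continuous (g \o (fun t : R => xs + t *: (x - xs)))}.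
  apply: within_continuous_comp.
    move=> y; rewrite inE => -[t t01 <-]; move: t01; rewrite /= in_itv => t01.
    by move: cg; rewrite continuous_open_subspace //; apply; rewrite inE; apply: star_set_ray.
  apply: continuous_subspaceT => t.
  by apply: cvgD; [exact: cvg_cst | exact: cvgZr_tmp cvg_id].
have [c _ cmax] := EVT_max ler01 cf.
by exists (g (xs + c *: (x - xs))) => _ [t [t01 _] <-]; apply: cmax; rewrite in_itv.
Qed.

Lemma le_ray_max x t : Omega x -> 0 <= t <= 1 ->
  g (xs + t *: (x - xs)) <= ray_max Omega xs g x.
Proof.
move=> Ox t01; rewrite ray_maxE; apply: (ub_le_sup (ray_image_bounded Ox)).
by exists t => //; split => //; apply: star_set_ray.
Qed.

Lemma ray_max_ge x : Omega x -> g x <= ray_max Omega xs g x.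
Proof.
move=> Ox; have := le_ray_max (t := 1) Ox; rewrite scale1r addrC subrK lexx ler01; exact.
Qed.

Lemma star_fun_ray_max : star_fun Omega xs (ray_max Omega xs g).
Proof.
move=> alpha x [Ox ux] t t01; split; first exact: st.
apply: le_trans ux; rewrite ray_maxE; apply: ge_sup; first exact: ray_image_neq0.
move=> _ [s [/andP[s0 s1] _] <-]; rewrite convex_comb_ray ray_comp.
have /andP[t0 t1] := unit_interval_subr t01.
by apply: le_ray_max => //; rewrite mulr_ge0 //= mulr_ile1.
Qed.

Lemma ray_max_le_star v x : star_fun Omega xs v ->
  (forall y, Omega y -> g y <= v y) -> Omega x -> ray_max Omega xs g x <= v x.
Proof.
move=> sv gv Ox; rewrite ray_maxE; apply: ge_sup; first exact: ray_image_neq0.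
move=> _ [t [t01 _] <-].
have := sv (v x) x (conj Ox (lexx _)) (1 - t) (unit_interval_subr t01).
rewrite convex_comb_ray (subKr 1 t) => -[Oy vy].
exact: le_trans (gv _ Oy) vy.
Qed.

End StarEnvelope.

Theorem proposition2p11 (R : realType) (n : nat) (Omega : set 'rV[R]_n)
  (xs : 'rV[R]_n) (g : 'rV[R]_n -> R) :
  open Omega -> connected Omega -> Omega xs -> star_set Omega xs ->
  {within Omega, continuous g} ->
  star_fun Omega xs (ray_max Omega xs g) /\
  (forall x, Omega x -> ray_max Omega xs g x = SSplus Omega xs g x).
Proof.
move=> oO _ Oxs st cg; split; first exact: star_fun_ray_max.
move=> x Ox; apply/esym/inf_attained.
  by exists (ray_max Omega xs g); split; [exact: star_fun_ray_max | exact: ray_max_ge].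
by move=> _ [v [sv gv] <-]; apply: ray_max_le_star.
Qed.
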